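(* Let $a_{n,1}$ denote the number of matchings of size $n$ with exactly one occurrence of the endhered pattern $21$. Then $a_{1,1}=0$, $a_{2,1}=1$, and for all $n\ge2$, $$a_{n+1,1}=2n\,(a_{n,1}+a_{n-1,1}).$$
   Context: A matching of size $n$ is a set of $n$ arcs $(a,b)$ with $1\le a<b\le 2n$ such that each point of $\{1,\dots,2n\}$ belongs to exactly one arc. An occurrence of the endhered pattern $21$ in a matching $\mu$ is a pair of arcs of $\mu$ of the form $(i+1,j+2),(i+2,j+1)$ (two nested arcs with consecutive starting points and consecutive ending points); the number of occurrences is the number of such pairs. *)

From mathcomp Require Import all_boot.
Set Implicit Arguments. Unset Strict Implicit. Unset Printing Implicit Defensive.

(* Points 1..2n are encoded as ordinals 'I_(2n): ordinal k stands for point k+1.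
   A matching of size n is a set of arcs (a,b), a < b, such that every point
   lies in exactly one arc. *)
Definition arcs (n : nat) := {set 'I_(n.*2) * 'I_(n.*2)}.

Definition is_matching (n : nat) (M : arcs n) : bool :=
  [forall p in M, (p.1 < p.2)%N] &&
  [forall x : 'I_(n.*2), #|[set p in M | (p.1 == x) || (p.2 == x)]| == 1].

(* has_arc M a b : (a,b) is an arc of M, with a, b given as points in 1..2n *)
Definition has_arc (n : nat) (M : arcs n) (a b : nat) : bool :=
  [exists p in M, ((p.1 : nat).+1 == a) && ((p.2 : nat).+1 == b)].

Definition occ21 (n : nat) (M : arcs n) : nat :=
  #|[set ij : 'I_(n.*2) * 'I_(n.*2) |
      has_arc M (ij.1 : nat).+1 (ij.2 : nat).+2 &&
      has_arc M (ij.1 : nat).+2 (ij.2 : nat).+1]|.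

Definition a_nk (n k : nat) : nat :=
  #|[set M : arcs n | is_matching M && (occ21 M == k)]|.

(* Inserting an arc (a+1, b+1) just inside an arc (a, b) of an occurrence-free
   matching creates exactly one occurrence of 21, and every matching with a single
   occurrence arises in this way from a unique such pair: delete the inner arc of its
   occurrence.  As a matching of size n has n arcs, a(n+1,1) = n a(n,0).
   Every matching of size n+1 comes from one of size n by adding an arc from a new
   point to a new last point.  That arc creates an occurrence only if its start is put
   just before the partner of the old last point, and it destroys an old occurrence
   exactly when its start separates the two left ends or the two right ends of that
   occurrence.  Counting the admissible starts gives a(n+1,0) = 2n a(n,0) + 2 a(n,1)
   for n >= 1, and eliminating a(.,0) from the two identities gives the recurrence. *)

From mathcomp Require Import all_boot zify.
Set Implicit Arguments. Unset Strict Implicit. Unset Printing Implicit Defensive.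

(* The new position of an old point [x] once two new points [p < q] are inserted. *)
Definition bump2 (p q x : nat) : nat := bump q (bump p x).

Section Bump2.

Variables p q : nat.
Hypothesis lt_pq : p < q.

Lemma ltn_bump2 x y : (bump2 p q x < bump2 p q y) = (x < y).
Proof. by rewrite /bump2 /bump; apply/idP/idP; lia. Qed.

Lemma bump2_inj : injective (bump2 p q).
Proof. by move=> x y; rewrite /bump2 /bump; lia. Qed.

Lemma bump2_neq_l x : bump2 p q x <> p.
Proof. by rewrite /bump2 /bump; lia. Qed.

Lemma bump2_neq_r x : bump2 p q x <> q.
Proof. by rewrite /bump2 /bump; lia. Qed.

Lemma bump2_ltn K x : q < K.+2 -> (bump2 p q x < K.+2) = (x < K).
Proof. by rewrite /bump2 /bump => ?; apply/idP/idP; lia. Qed.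

Lemma bump2_onto z : z <> p -> z <> q -> exists x, bump2 p q x = z.
Proof. by exists (z - (p < z) - (q < z)); rewrite /bump2 /bump; lia. Qed.

Lemma bump2_succ x x' : bump2 p q x' = (bump2 p q x).+1 -> x' = x.+1.
Proof. by rewrite /bump2 /bump; lia. Qed.

Lemma bump2_succ_skip x :
  bump2 p q x.+1 = (bump2 p q x).+1 \/ (bump2 p q x).+1 \in [:: p; q].
Proof. by rewrite !inE /bump2 /bump; lia. Qed.

End Bump2.

Arguments bump2_neq_l {p q} lt_pq x.
Arguments bump2_neq_r {p q} lt_pq x.

Lemma pair_ord_inj K (x y : 'I_K * 'I_K) :
  x.1 = y.1 :> nat -> x.2 = y.2 :> nat -> x = y.
Proof. by case: x y => [a b] [c d] /= /val_inj -> /val_inj ->. Qed.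

Lemma card_sep_sum (T : finType) (A : {set T}) (P : pred T) :
  #|[set x in A | P x]| = \sum_(x in A) P x.
Proof.
rewrite -sum1_card big_mkcond [RHS]big_mkcond.
by apply: eq_bigr => x _; rewrite inE; case: (x \in A).
Qed.

Lemma card_ord_ltn m : #|[set p : 'I_m.+1 | p < m]| = m.
Proof.
have -> : [set p : 'I_m.+1 | p < m] = [set~ ord_max].
  by apply/setP=> p; rewrite !inE -(inj_eq val_inj) /=; have := ltn_ord p; lia.
by rewrite cardsC1 card_ord.
Qed.

Lemma card_ord_ltn_neq m c : c < m ->
  #|[set p : 'I_m.+1 | (p < m) && (p != c :> nat)]| = m.-1.
Proof.
move=> ltcm; have ltcm1 : c < m.+1 by apply: ltnW.
have -> : [set p : 'I_m.+1 | (p < m) && (p != c :> nat)] = ~: [set ord_max; inord c].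
  by apply/setP=> p; rewrite !inE -!(inj_eq val_inj) /= inordK //; have := ltn_ord p; lia.
have := cardsC [set ord_max; inord c : 'I_m.+1].
by rewrite cards2 card_ord -(inj_eq val_inj) /= inordK //; lia.
Qed.

Lemma card_sum_fibers (A B C : finType) (P : pred A) (Q : A -> pred B) (R : pred C)
    (f : A * B -> C) (S := [set x : A * B | P x.1 && Q x.1 x.2]) :
  {in S &, injective f} -> {in S, forall x, R (f x)} ->
  (forall c, R c -> exists2 x, x \in S & c = f x) ->
  #|[set c | R c]| = \sum_(a | P a) #|[set b | Q a b]|.
Proof.
move=> f_inj f_into f_onto.
have -> : [set c | R c] = f @: S.
  apply/setP=> c; rewrite inE; apply/idP/imsetP => [/f_onto//|[x xS ->]].
  exact: f_into.
rewrite card_in_imset // -sum1dep_card -(pair_big_dep P Q (fun _ _ => 1)) /=.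
apply: eq_bigr => a _; exact: sum1dep_card.
Qed.

Section Arcs.

Variable K : nat.
Implicit Types M : {set 'I_K * 'I_K}.

(* Points are numbered from 0 here: [joins M a b] is [has_arc M a.+1 b.+1]. *)
Definition joins M (a b : nat) : bool :=
  [exists x in M, (x.1 == a :> nat) && (x.2 == b :> nat)].

Lemma joinsP M a b :
  reflect (exists2 x, x \in M & x.1 = a :> nat /\ x.2 = b :> nat) (joins M a b).
Proof.
apply: (iffP exists_inP) => [[x xM /andP[/eqP <- /eqP <-]]|[x xM [<- <-]]].
  by exists x.
by exists x; rewrite ?eqxx.
Qed.

Lemma joins_ltK M a b : joins M a b -> a < K /\ b < K.
Proof. by case/joinsP=> x _ [<- <-]. Qed.

Lemma joins_mem M (x : 'I_K * 'I_K) : joins M x.1 x.2 = (x \in M).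
Proof.
apply/joinsP/idP=> [[y yM [e1 e2]]|xM]; last by exists x.
by rewrite -(pair_ord_inj e1 e2).
Qed.

Lemma eq_joins M M' : (forall a b, joins M a b = joins M' a b) -> M = M'.
Proof. by move=> eqMM'; apply/setP=> x; rewrite -!joins_mem eqMM'. Qed.

Record matching M : Prop := Matching {
  matching_ltn : forall a b, joins M a b -> a < b;
  matching_cover : forall z, z < K -> exists w, joins M z w \/ joins M w z;
  matching_uniq : forall a b c d, joins M a b -> joins M c d ->
    [\/ a = c, a = d, b = c | b = d] -> a = c /\ b = d }.

Lemma matching_mem_eq M (x y : 'I_K * 'I_K) (z : 'I_K) : matching M ->
  x \in M -> y \in M -> (x.1 == z) || (x.2 == z) -> (y.1 == z) || (y.2 == z) -> x = y.
Proof.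
move=> hM xM yM hx hy; rewrite -!joins_mem in xM yM.
have [e1 e2] : x.1 = y.1 :> nat /\ x.2 = y.2 :> nat.
  apply: (matching_uniq hM xM yM).
  by case/orP: hx hy => /eqP-> /orP[]/eqP->; [apply: Or41|apply: Or42|apply: Or43|apply: Or44].
exact: pair_ord_inj.
Qed.

Lemma matchingP M :
  reflect (matching M)
    ([forall p in M, (p.1 < p.2)%N] &&
     [forall x : 'I_K, #|[set p in M | (p.1 == x) || (p.2 == x)]| == 1]).
Proof.
apply: (iffP andP) => [[/forall_inP ltM /forallP cardM]|hM].
  have uniqM (x y : 'I_K * 'I_K) (z : 'I_K) : x \in M -> y \in M ->
      (x.1 == z) || (x.2 == z) -> (y.1 == z) || (y.2 == z) -> x = y.
    move=> xM yM hx hy.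
    have /card_le1_eqP : #|[set p in M | (p.1 == z) || (p.2 == z)]| <= 1.
      by rewrite (eqP (cardM z)).
    by apply; rewrite inE ?xM ?yM.
  split.
  - by move=> a b /joinsP[x xM [<- <-]]; apply: ltM.
  - move=> z ltzK; set z' := Ordinal ltzK.
    have /card_gt0P[x] : 0 < #|[set p in M | (p.1 == z') || (p.2 == z')]|.
      by rewrite (eqP (cardM z')).
    rewrite inE => /andP[xM /orP[]/eqP ex].
      by exists x.2; left; apply/joinsP; exists x; rewrite ?ex.
    by exists x.1; right; apply/joinsP; exists x; rewrite ?ex.
  - move=> a b c d /joinsP[x xM [<- <-]] /joinsP[y yM [<- <-]] shared.
    have [z hx hy] : exists2 z : 'I_K, (x.1 == z) || (x.2 == z) & (y.1 == z) || (y.2 == z).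
      case: shared => /esym e; [exists x.1|exists x.1|exists x.2|exists x.2];
        rewrite ?eqxx ?orbT //; apply/orP; [left|right|left|right]; exact/eqP/val_inj.
    by rewrite (uniqM x y z).
split.
  by apply/forall_inP=> x xM; apply: (matching_ltn hM); rewrite joins_mem.
apply/forallP=> z; rewrite eqn_leq; apply/andP; split.
  apply/card_le1_eqP=> x y; rewrite !inE => /andP[xM hx] /andP[yM hy].
  exact: matching_mem_eq hM yM xM hy hx.
have [w [/joinsP[x xM [e1 _]]|/joinsP[x xM [_ e2]]]] := matching_cover hM (ltn_ord z).
  by apply/card_gt0P; exists x; rewrite !inE xM; apply/orP; left; apply/eqP/val_inj.
by apply/card_gt0P; exists x; rewrite !inE xM; apply/orP; right; apply/eqP/val_inj.
Qed.

Lemma card_matching M : matching M -> (#|M|).*2 = K.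
Proof.
move/matchingP/andP=> [/forall_inP ltM /forallP cardM].
transitivity (\sum_(z : 'I_K) 1); last by rewrite sum1_card card_ord.
rewrite -muln2 -sum_nat_const.
under [RHS]eq_bigr => z _ do rewrite -(eqP (cardM z)) card_sep_sum.
rewrite exchange_big; apply: eq_bigr => x xM.
have neq : x.1 != x.2 by rewrite -(inj_eq val_inj) neq_ltn ltM.
have <- : #|[set x.1; x.2]| = 2 by rewrite cards2 neq.
rewrite -sum1_card big_mkcond.
by apply: eq_bigr => z _; rewrite !inE ![z == _]eq_sym; case: (_ || _).
Qed.

End Arcs.

Definition add_arc K (M : {set 'I_K * 'I_K}) (p q : nat) : {set 'I_K.+2 * 'I_K.+2} :=
  [set x : 'I_K.+2 * 'I_K.+2 | ((x.1 == p :> nat) && (x.2 == q :> nat)) ||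
           [exists y in M, (bump2 p q y.1 == x.1) && (bump2 p q y.2 == x.2)]].

Definition del_arc K (M : {set 'I_K.+2 * 'I_K.+2}) (p q : nat) : {set 'I_K * 'I_K} :=
  [set x : 'I_K * 'I_K | joins M (bump2 p q x.1) (bump2 p q x.2)].

Lemma joins_del K (M : {set 'I_K.+2 * 'I_K.+2}) p q a b :
  joins (del_arc M p q) a b = [&& a < K, b < K & joins M (bump2 p q a) (bump2 p q b)].
Proof.
apply/joinsP/and3P => [[x + [<- <-]]|[ltaK ltbK abM]]; first by rewrite inE.
by exists (Ordinal ltaK, Ordinal ltbK); rewrite ?inE.
Qed.

Section AddArc.

Variables K p q : nat.
Hypotheses (lt_pq : p < q) (lt_qK : q < K.+2).

Lemma joins_add_new (M : {set 'I_K * 'I_K}) : joins (add_arc M p q) p q.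
Proof.
by apply/joinsP; exists (Ordinal (ltn_trans lt_pq lt_qK), Ordinal lt_qK); rewrite ?inE ?eqxx.
Qed.

Lemma joins_add_bump2 (M : {set 'I_K * 'I_K}) a b :
  joins (add_arc M p q) (bump2 p q a) (bump2 p q b) = joins M a b.
Proof.
apply/joinsP/joinsP => [[x + [ea eb]]|[y yM [ea eb]]].
  rewrite inE => /orP[/andP[/eqP e _]|/exists_inP[y yM /andP[/eqP e1 /eqP e2]]].
    by have := bump2_neq_l lt_pq a; rewrite -ea e.
  by exists y => //; split; apply: (bump2_inj lt_pq); [rewrite e1 ea|rewrite e2 eb].
have bump2K z : bump2 p q z < K.+2 = (z < K) := bump2_ltn lt_pq z lt_qK.
have [ltaK ltbK] : bump2 p q a < K.+2 /\ bump2 p q b < K.+2 by rewrite !bump2K -ea -eb.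
exists (Ordinal ltaK, Ordinal ltbK) => //; rewrite inE; apply/orP; right.
by apply/exists_inP; exists y; rewrite //= ea eb !eqxx.
Qed.

Lemma joins_addP (M : {set 'I_K * 'I_K}) a b :
  joins (add_arc M p q) a b <->
  (a = p /\ b = q) \/ exists x y, [/\ joins M x y, a = bump2 p q x & b = bump2 p q y].
Proof.
split=> [/joinsP[z + [<- <-]]|[[-> ->]|[x [y [xyM -> ->]]]]]; last 2 first.
- exact: joins_add_new.
- by rewrite joins_add_bump2.
rewrite inE => /orP[/andP[/eqP -> /eqP ->]|/exists_inP[y yM /andP[/eqP <- /eqP <-]]].
  by left.
by right; exists y.1, y.2; rewrite joins_mem.
Qed.

Lemma matching_add (M : {set 'I_K * 'I_K}) : matching M -> matching (add_arc M p q).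
Proof.
move=> hM; split.
- move=> a b /joins_addP[[-> ->] //|[x [y [xyM -> ->]]]].
  by rewrite ltn_bump2 //; apply: (matching_ltn hM).
- move=> z ltzK.
  have [-> | neq_zp] := eqVneq z p; first by exists q; left; apply: joins_add_new.
  have [-> | neq_zq] := eqVneq z q; first by exists p; right; apply: joins_add_new.
  have [x ex] := bump2_onto lt_pq (elimN eqP neq_zp) (elimN eqP neq_zq); subst z.
  rewrite (bump2_ltn lt_pq x lt_qK) in ltzK.
  have [w [xwM|wxM]] := matching_cover hM ltzK.
    by exists (bump2 p q w); left; rewrite joins_add_bump2.
  by exists (bump2 p q w); right; rewrite joins_add_bump2.
- move=> a b c d /joins_addP[[-> ->]|[x [y [xyM -> ->]]]].
    all: move=> /joins_addP[[-> ->]|[x' [y' [xyM' -> ->]]]] //.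
  + by case=> /esym; [move/bump2_neq_l|move/bump2_neq_l|move/bump2_neq_r|move/bump2_neq_r].
  + by case; [move/bump2_neq_l|move/bump2_neq_r|move/bump2_neq_l|move/bump2_neq_r].
  + move=> shared; suff [-> ->] : x = x' /\ y = y' by [].
    apply: (matching_uniq hM xyM xyM').
    by case: shared => /(bump2_inj lt_pq) ->; [apply: Or41|apply: Or42|apply: Or43|apply: Or44].
Qed.

Lemma add_arcK (M : {set 'I_K * 'I_K}) : del_arc (add_arc M p q) p q = M.
Proof.
apply: eq_joins => a b; rewrite joins_del joins_add_bump2.
by apply/and3P/idP => [[] //|abM]; have [] := joins_ltK abM.
Qed.

End AddArc.

Section DelArc.

Variables (K p q : nat) (M : {set 'I_K.+2 * 'I_K.+2}).
Hypotheses (hM : matching M) (pqM : joins M p q).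

Let lt_pq : p < q := matching_ltn hM pqM.
Let lt_qK : q < K.+2 := (joins_ltK pqM).2.

Lemma joins_off_pq a b : joins M a b -> a <> p -> b <> q ->
  exists x y, [/\ x < K, y < K, a = bump2 p q x & b = bump2 p q y].
Proof.
move=> abM neq_ap neq_bq.
have [neq_aq neq_bp] : a <> q /\ b <> p.
  split=> e.
    by have [] := matching_uniq hM abM pqM (Or42 _ _ _ e).
  by have [] := matching_uniq hM abM pqM (Or43 _ _ _ e).
have [x ex] := bump2_onto lt_pq neq_ap neq_aq; have [y ey] := bump2_onto lt_pq neq_bp neq_bq.
have [ltaK ltbK] := joins_ltK abM.
exists x, y; rewrite -(bump2_ltn lt_pq x lt_qK) -(bump2_ltn lt_pq y lt_qK) ex ey.
by split.
Qed.

Lemma matching_del : matching (del_arc M p q).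
Proof.
split.
- by move=> a b; rewrite joins_del => /and3P[_ _ /(matching_ltn hM)]; rewrite ltn_bump2.
- move=> z ltzK; have ltzK2 : bump2 p q z < K.+2 by rewrite bump2_ltn.
  have [w [zwM|wzM]] := matching_cover hM ltzK2.
  + have [||x [y [_ ltyK _ ew]]] := joins_off_pq zwM.
    * exact: bump2_neq_l.
    * by move=> ewq; have [/bump2_neq_l []] := matching_uniq hM zwM pqM (Or44 _ _ _ ewq).
    by exists y; left; rewrite joins_del ltzK ltyK -ew.
  + have [||x [y [ltxK _ ew _]]] := joins_off_pq wzM; last first.
    * by exists x; right; rewrite joins_del ltzK ltxK -ew.
    * exact: bump2_neq_r.
    * by move=> ewp; have [_ /bump2_neq_r []] := matching_uniq hM wzM pqM (Or41 _ _ _ ewp).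
- move=> a b c d; rewrite !joins_del => /and3P[_ _ abM] /and3P[_ _ cdM] shared.
  have [] := matching_uniq hM abM cdM.
    by case: shared => ->; [apply: Or41|apply: Or42|apply: Or43|apply: Or44].
  by move=> /(bump2_inj lt_pq) -> /(bump2_inj lt_pq) ->.
Qed.

Lemma del_arcK : add_arc (del_arc M p q) p q = M.
Proof.
apply: eq_joins => a b; apply/idP/idP => [/(joins_addP lt_pq lt_qK)|abM].
  by case=> [[-> ->] //|[x [y [+ -> ->]]]]; rewrite joins_del => /and3P[].
apply/(joins_addP lt_pq lt_qK).
have [eap | neq_ap] := eqVneq a p.
  by left; exact: (matching_uniq hM abM pqM (Or41 _ _ _ eap)).
have [ebq | neq_bq] := eqVneq b q.
  by left; exact: (matching_uniq hM abM pqM (Or44 _ _ _ ebq)).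
have [x [y [ltxK ltyK eax eby]]] := joins_off_pq abM (elimN eqP neq_ap) (elimN eqP neq_bq).
by right; exists x, y; rewrite joins_del ltxK ltyK -eax -eby.
Qed.

End DelArc.

Definition occ K (M : {set 'I_K * 'I_K}) (i j : nat) : bool :=
  joins M i j.+1 && joins M i.+1 j.

Definition occs K (M : {set 'I_K * 'I_K}) : {set 'I_K * 'I_K} :=
  [set ij : 'I_K * 'I_K | occ M ij.1 ij.2].

Lemma occ21E n (M : arcs n) : occ21 M = #|occs M|.
Proof. by []. Qed.

Section Occurrences.

Variable K : nat.
Implicit Types M : {set 'I_K * 'I_K}.

Lemma occ_ltK M i j : occ M i j -> i.+1 < K /\ j.+1 < K.
Proof. by case/andP=> /joins_ltK[_ ?] /joins_ltK[? _]. Qed.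

Lemma occ_ord M i j :
  occ M i j -> exists2 ij, ij \in occs M & ij.1 = i :> nat /\ ij.2 = j :> nat.
Proof.
move=> ijM; have [/ltnW ltiK /ltnW ltjK] := occ_ltK ijM.
by exists (Ordinal ltiK, Ordinal ltjK); rewrite ?inE.
Qed.

Lemma card_occs_eq0P M : reflect (forall i j, ~~ occ M i j) (#|occs M| == 0).
Proof.
rewrite cards_eq0; apply: (iffP eqP) => [occs0 i j|noocc].
  by apply/negP=> /occ_ord[ij]; rewrite occs0 inE.
by apply/setP=> ij; rewrite !inE; apply/negbTE/noocc.
Qed.

Lemma card_occs_eq1P M :
  reflect (exists i j, occ M i j /\ forall i' j', occ M i' j' -> i' = i /\ j' = j)
          (#|occs M| == 1).
Proof.
apply: (iffP card1P) => [[ij occsE]|[i [j [ijM uniq_ij]]]].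
  have := occsE ij; rewrite !inE eqxx => ijM.
  exists ij.1, ij.2; split=> // i j /occ_ord[ij' + [<- <-]].
  by rewrite occsE inE => /eqP ->.
have [ij ijocc [ei ej]] := occ_ord ijM; exists ij => ij'; rewrite inE.
apply/idP/eqP=> [/uniq_ij[ei' ej']|->]; last by rewrite ei ej.
by apply: pair_ord_inj; rewrite ?ei' ?ej'.
Qed.

End Occurrences.

Section AddOcc.

Variables K p q : nat.
Hypotheses (lt_pq : p < q) (lt_qK : q < K.+2).
Variable M : {set 'I_K * 'I_K}.

Lemma occ_add_bump2 x y : occ M x y ->
  bump2 p q x.+1 = (bump2 p q x).+1 -> bump2 p q y.+1 = (bump2 p q y).+1 ->
  occ (add_arc M p q) (bump2 p q x) (bump2 p q y).
Proof. by move=> /andP[xyM x'yM] ex ey; rewrite /occ -ex -ey !joins_add_bump2 ?xyM. Qed.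

Lemma occ_add_cases u v : occ (add_arc M p q) u v ->
  [\/ [/\ u = p, v.+1 = q & joins (add_arc M p q) p.+1 v],
      [/\ u.+1 = p, v = q & joins (add_arc M p q) u v.+1] |
      exists x y, [/\ occ M x y, u = bump2 p q x, v = bump2 p q y,
                      bump2 p q x.+1 = u.+1 & bump2 p q y.+1 = v.+1]].
Proof.
case/andP=> outer inner.
have [[eu ev]|[x [y' [xy'M eu ev]]]] := (joins_addP lt_pq lt_qK M _ _).1 outer.
  by subst u; apply: Or31.
have [[eu' ev']|[x' [y [x'yM eu' ev']]]] := (joins_addP lt_pq lt_qK M _ _).1 inner.
  by apply: Or32.
have ex' : x' = x.+1 by apply: (bump2_succ lt_pq); rewrite -eu' eu.
have ey' : y' = y.+1 by apply: (bump2_succ lt_pq); rewrite -ev ev'.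
subst x' y'; apply: Or33; exists x, y.
by rewrite /occ xy'M x'yM -eu' -ev eu ev'.
Qed.

End AddOcc.

Definition occ_free_starts K (M : {set 'I_K * 'I_K}) : {set 'I_K.+2} :=
  [set p : 'I_K.+2 | (p < K.+1) && (#|occs (add_arc M p K.+1)| == 0)].

Section LastArc.

Variables (K : nat) (M : {set 'I_K * 'I_K}).
Hypothesis hM : matching M.

(* The new arc (p, K+1) forms an occurrence only with the old arc (p, K-1) of M,
   and it splits an old occurrence (i, j) exactly when p is i+1 or j+1. *)
Lemma mem_occ_free_starts (p : 'I_K.+2) :
  (p \in occ_free_starts M) =
  [&& p < K.+1, [forall ij in occs M, (ij.1.+1 == p :> nat) || (ij.2.+1 == p :> nat)]
    & ~~ joins M p K.-1].
Proof.
rewrite inE; case: ltnP => //= ltpK; apply/card_occs_eq0P/andP => [noocc|[hit nopM]].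
  split.
    apply/forall_inP=> ij; rewrite inE => ijM.
    apply/negPn/negP => /norP[/eqP ne1 /eqP ne2].
    have [ltiK ltjK] := occ_ltK ijM.
    have /negP[] := noocc (bump2 p K.+1 ij.1) (bump2 p K.+1 ij.2).
    by apply: (occ_add_bump2 ltpK (ltnSn _) ijM); rewrite /bump2 /bump; lia.
  apply/negP => pM; have lt_pK := matching_ltn hM pM.
  have /negP[] := noocc p K; apply/andP; split; first exact: joins_add_new.
  have ep : bump2 p K.+1 p = p.+1 by rewrite /bump2 /bump; lia.
  have eK : bump2 p K.+1 K.-1 = K by rewrite /bump2 /bump; lia.
  by rewrite -ep -[X in joins _ _ X]eK joins_add_bump2.
move=> u v; apply/negP => /(occ_add_cases ltpK (ltnSn _))[] [].
- move=> _ [->] /(joins_addP ltpK (ltnSn _))[[] | [x [y [xyM ex ey]]]]; first lia.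
  have ex' : x = p by move: ex; rewrite /bump2 /bump; lia.
  have ey' : y = K.-1 by move: ey; rewrite /bump2 /bump; lia.
  by move: nopM; rewrite -ex' -ey' xyM.
- by move=> _ -> /joins_ltK[_]; rewrite ltnn.
- move=> x [y [xyM -> -> ex ey]]; have [ij + [eix ejy]] := occ_ord xyM.
  move/(forall_inP hit); rewrite eix ejy; move: ex ey; rewrite /bump2 /bump; lia.
Qed.

(* All starts but the partner of the old last point, if there is one. *)
Lemma card_occ_free_starts0 : #|occs M| = 0 -> #|occ_free_starts M| = maxn K 1.
Proof.
move/eqP/card_occs_eq0P => noocc.
have hit (p : 'I_K.+2) :
    [forall ij in occs M, (ij.1.+1 == p :> nat) || (ij.2.+1 == p :> nat)].
  by apply/forall_inP=> ij; rewrite inE (negbTE (noocc _ _)).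
have [K0|K_gt0] := posnP K.
  have nojoin (p : 'I_K.+2) : joins M p K.-1 = false.
    by apply/negbTE/negP=> /joins_ltK[_]; rewrite K0.
  rewrite (_ : occ_free_starts M = [set p : 'I_K.+2 | p < K.+1]).
    by rewrite card_ord_ltn K0.
  by apply/setP=> p; rewrite mem_occ_free_starts // hit nojoin inE andbT.
have [c cM] : exists c, joins M c K.-1.
  have ltK1 : K.-1 < K by rewrite ltn_predL.
  have [w [lastM|wM]] := matching_cover hM ltK1; last by exists w.
  by have := matching_ltn hM lastM; have := (joins_ltK lastM).2; lia.
have ltcK : c < K.+1 by have := (joins_ltK cM).1; lia.
rewrite (_ : occ_free_starts M = [set p : 'I_K.+2 | (p < K.+1) && (p != c :> nat)]).
  by rewrite card_ord_ltn_neq //=; lia.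
apply/setP=> p; rewrite mem_occ_free_starts // hit inE /=; congr (_ && _).
apply/idP/idP => [nopM|neq_pc]; first by apply: contraNneq nopM => ->.
apply/negP => pM; have [epc _] := matching_uniq hM pM cM (Or44 _ _ _ erefl).
by rewrite epc eqxx in neq_pc.
Qed.

Lemma card_occ_free_starts1 : #|occs M| = 1 -> #|occ_free_starts M| = 2.
Proof.
move/eqP/card_occs_eq1P => [x [y [xyM uniq_xy]]].
have [ltxK ltyK] := occ_ltK xyM; have /andP[outM innM] := xyM.
have lt_xy := matching_ltn hM innM.
rewrite (_ : occ_free_starts M = [set inord x.+1; inord y.+1]).
  by rewrite cards2 -(inj_eq val_inj) /= !inordK //; lia.
apply/setP=> p; rewrite mem_occ_free_starts // !inE -!(inj_eq val_inj) /= !inordK;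
  [|lia..].
apply/and3P/idP => [[_ /forall_inP hit _]|hitp].
  have [ij ijocc [ex ey]] := occ_ord xyM.
  by have := hit ij ijocc; rewrite ex ey ![_ == nat_of_ord p]eq_sym.
split.
- by move: hitp; lia.
- apply/forall_inP=> ij; rewrite inE => /uniq_xy[-> ->].
  by rewrite !(eq_sym _ (nat_of_ord p)).
- apply/negP=> pM; case/orP: hitp => /eqP ep; rewrite ep in pM.
    by have := matching_uniq hM pM innM (Or41 _ _ _ erefl); lia.
  by have := matching_uniq hM pM outM (Or42 _ _ _ erefl); lia.
Qed.

Lemma occ_free_starts_eq0 : 1 < #|occs M| -> occ_free_starts M = set0.
Proof.
move=> occs_gt1; apply/setP=> p; rewrite mem_occ_free_starts // inE.
apply/negP=> /and3P[_ /forall_inP hit _]; move: occs_gt1; rewrite ltnNge => /negP[].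
apply/card_le1_eqP=> ij ij' ijocc ij'occ.
case: ij ijocc => [i j] ijocc; case: ij' ij'occ => [i' j'] ij'occ.
have /= := hit _ ijocc; have /= := hit _ ij'occ; rewrite !inE /= in ijocc ij'occ.
case/andP: ijocc => out inn; case/andP: ij'occ => out' inn'.
have := matching_ltn hM inn; have := matching_ltn hM inn'.
move=> lt' lt /orP[]/eqP e' /orP[]/eqP e; apply: pair_ord_inj => /=.
all: first
  [ have := matching_uniq hM inn inn' (Or41 _ _ _ (etrans e (esym e')))
  | have := matching_uniq hM inn out' (Or42 _ _ _ (etrans e (esym e')))
  | have := matching_uniq hM out inn' (Or43 _ _ _ (etrans e (esym e')))
  | have := matching_uniq hM out out' (Or44 _ _ _ (etrans e (esym e'))) ]; lia.
Qed.

End LastArc.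

Lemma occ_add_nested K (M : {set 'I_K * 'I_K}) a b :
  matching M -> (forall u v, ~~ occ M u v) -> joins M a b ->
  forall u v, occ (add_arc M a.+1 b.+1) u v = (u == a) && (v == b.+1).
Proof.
move=> hM noocc abM u v; have lt_ab := matching_ltn hM abM.
have [ltaK ltbK] := joins_ltK abM.
have lt_pq : a.+1 < b.+1 by [].
have lt_qK : b.+1 < K.+2 by apply: ltnW.
apply/idP/andP => [/(occ_add_cases lt_pq lt_qK)[]|[/eqP-> /eqP->]].
- move=> [-> [->] /(joins_addP lt_pq lt_qK)[[]|[x [y [xyM ex ey]]]]]; first lia.
  have ex' : x = a.+1 by move: ex; rewrite /bump2 /bump; lia.
  have ey' : y = b.-1 by move: ey; rewrite /bump2 /bump; lia.
  have /negP[] := noocc a b.-1.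
  by rewrite /occ prednK ?abM -?ex' -?ey' //; lia.
- by move=> [/eqP + ->]; rewrite eqSS => ->.
- by move=> [x [y [xyM]]]; rewrite (negbTE (noocc x y)) in xyM.
rewrite /occ joins_add_new // andbT.
have ea : bump2 a.+1 b.+1 a = a by rewrite /bump2 /bump; lia.
have eb : bump2 a.+1 b.+1 b = b.+2 by rewrite /bump2 /bump; lia.
by rewrite -[X in joins _ X]ea -eb joins_add_bump2.
Qed.

Lemma occ_del_inner K (M : {set 'I_K.+2 * 'I_K.+2}) i j :
  matching M -> occ M i j -> (forall i' j', occ M i' j' -> i' = i /\ j' = j) ->
  forall u v, ~~ occ (del_arc M i.+1 j) u v.
Proof.
move=> hM /andP[outM innM] uniq_ij u v.
have lt_ij : i.+1 < j := matching_ltn hM innM.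
apply/negP=> /andP[]; rewrite !joins_del => /and3P[_ _ out_uv] /and3P[_ _ inn_uv].
have lt_uv : u.+1 < v by rewrite -(ltn_bump2 lt_ij); exact: (matching_ltn hM inn_uv).
(* (u, v) = (i, j-2) would make (i+1, j-1) a second occurrence of M. *)
have not_shifted : u = i -> v = j.-2 -> False.
  move=> eu ev; have Eu1 : bump2 i.+1 j u.+1 = i.+2 by rewrite /bump2 /bump; lia.
  have Ev : bump2 i.+1 j v = j.-1 by rewrite /bump2 /bump; lia.
  have [] := uniq_ij i.+1 j.-1; last lia.
  by rewrite /occ prednK ?innM -?Eu1 -?Ev //; lia.
have [Eu|] := bump2_succ_skip lt_ij u; last rewrite !inE => /orP[]/eqP skip_u.
- have [Ev|] := bump2_succ_skip lt_ij v; last rewrite !inE => /orP[]/eqP skip_v.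
  + have /uniq_ij[_] : occ M (bump2 i.+1 j u) (bump2 i.+1 j v).
      by rewrite /occ -Eu -Ev out_uv inn_uv.
    exact: bump2_neq_r.
  + by have := matching_uniq hM inn_uv outM (Or43 _ _ _ (succn_inj skip_v)); lia.
  + have Ev1 : bump2 i.+1 j v.+1 = j.+1 by move: skip_v; rewrite /bump2 /bump; lia.
    have [Eu_i _] := matching_uniq hM out_uv outM (Or44 _ _ _ Ev1).
    by apply: not_shifted; move: Eu_i skip_v; rewrite /bump2 /bump; lia.
- have [_ Ev1] := matching_uniq hM out_uv outM (Or41 _ _ _ (succn_inj skip_u)).
  by apply: not_shifted; move: Ev1 skip_u; rewrite /bump2 /bump; lia.
- have Eu1 : bump2 i.+1 j u.+1 = j.+1 by move: skip_u; rewrite /bump2 /bump; lia.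
  by have := matching_uniq hM inn_uv outM (Or42 _ _ _ Eu1); lia.
Qed.

Lemma is_matchingP n (M : arcs n) : reflect (matching M) (is_matching M).
Proof. exact: matchingP. Qed.

Lemma card_arcs_matching n (M : arcs n) : is_matching M -> #|M| = n.
Proof. by move/is_matchingP/card_matching/double_inj. Qed.

Lemma a_nkS1 n : a_nk n.+1 1 = n * a_nk n 0.
Proof.
rewrite /a_nk (@card_sum_fibers _ _ _
  (fun M : arcs n => is_matching M && (occ21 M == 0)) (fun M pq => pq \in M) _
  (fun x => add_arc x.1 x.2.1.+1 x.2.2.+1 : arcs n.+1)).
- rewrite mulnC -sum_nat_cond_const; apply: eq_bigr => M /andP[hM _].
  by rewrite -[in RHS](card_arcs_matching hM); apply: eq_card => pq; rewrite inE.
- move=> [M1 [a1 b1]] [M2 [a2 b2]]; rewrite !inE /= -!joins_mem /=.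
  move=> /andP[/andP[/is_matchingP hM1 /card_occs_eq0P noocc1] abM1].
  move=> /andP[/andP[/is_matchingP hM2 /card_occs_eq0P noocc2] abM2] eqf.
  have := occ_add_nested hM1 noocc1 abM1 a1 b1.+1.
  rewrite eqf occ_add_nested // !eqxx eqSS => /andP[/eqP ea /eqP eb].
  have [ltab ltbK] : a1.+1 < b1.+1 /\ b1.+1 < n.*2.+2.
    by have := matching_ltn hM1 abM1; have := ltn_ord b1; lia.
  move: ea eb => /val_inj ea /val_inj eb; subst a2 b2.
  by rewrite -(add_arcK ltab ltbK M1) eqf add_arcK.
- move=> [M [a b]]; rewrite !inE /= -joins_mem /=.
  move=> /andP[/andP[/is_matchingP hM /card_occs_eq0P noocc] abM].
  have [ltab ltbK] : a.+1 < b.+1 /\ b.+1 < n.*2.+2.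
    by have := matching_ltn hM abM; have := ltn_ord b; lia.
  apply/andP; split; first exact/is_matchingP/matching_add.
  apply/card_occs_eq1P; exists a, b.+1; rewrite occ_add_nested // !eqxx.
  by split=> // u v; rewrite occ_add_nested // => /andP[/eqP -> /eqP ->].
- move=> M' /andP[/is_matchingP hM' /card_occs_eq1P[i [j [ijocc uniq_ij]]]].
  have /andP[outM innM] := ijocc; have lt_ij := matching_ltn hM' innM.
  have [ltiK ltjK] : i < n.*2.+2 /\ j.+1 < n.*2.+2 := joins_ltK outM.
  pose M : arcs n := del_arc M' i.+1 j.
  have Ei : bump2 i.+1 j i = i by rewrite /bump2 /bump; lia.
  have Ej : bump2 i.+1 j j.-1 = j.+1 by rewrite /bump2 /bump; lia.
  have : joins M i j.-1 by rewrite joins_del Ei Ej outM andbT; apply/andP; split; lia.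
  case/joinsP=> z zM [ez1 ez2]; exists (M, z).
    rewrite inE /= zM andbT; apply/andP; split; first exact/is_matchingP/matching_del.
    by apply/card_occs_eq0P; apply: occ_del_inner.
  by rewrite /= ez1 ez2 prednK ?del_arcK //; lia.
Qed.

Lemma a_nk_sum n k : a_nk n k = \sum_(M : arcs n | is_matching M) (occ21 M == k).
Proof.
by rewrite /a_nk -sum1dep_card big_mkcondr; apply: eq_bigr => M _; case: (_ == _).
Qed.

Lemma a_nkS0 n : a_nk n.+1 0 = maxn n.*2 1 * a_nk n 0 + 2 * a_nk n 1.
Proof.
have lt_last : n.*2.+1 < n.*2.+2 by [].
rewrite [LHS]/a_nk (@card_sum_fibers _ _ _ (fun M : arcs n => is_matching M)
  (fun M p => p \in occ_free_starts M) _ (fun x => add_arc x.1 x.2 n.*2.+1 : arcs n.+1)).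
- rewrite !a_nk_sum !big_distrr -big_split; apply: eq_bigr => M /is_matchingP hM /=.
  rewrite (eq_card (B := occ_free_starts M)) => [|p]; last by rewrite inE.
  rewrite occ21E; case: {-1}#|occs M| (erefl #|occs M|) => [|[|k]] card_occs.
  + by rewrite card_occ_free_starts0 // muln1 muln0 addn0.
  + by rewrite card_occ_free_starts1 // muln0.
  + by rewrite occ_free_starts_eq0 ?cards0 ?card_occs ?muln0.
- move=> [M1 p1] [M2 p2]; rewrite !inE /= => /andP[_ free1] /andP[_ free2] eqf.
  have /andP[lt_p1 _] := free1; have /andP[lt_p2 _] := free2.
  have := joins_add_new lt_p1 lt_last M1; rewrite eqf.
  case/(joins_addP lt_p2 lt_last) => [[/val_inj ep _]|[x [y [_ _ /esym/bump2_neq_r []]]]] //.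
  by subst p2; rewrite -(add_arcK lt_p1 lt_last M1) eqf add_arcK.
- move=> [M p]; rewrite !inE /= => /and3P[/is_matchingP hM lt_p free].
  by rewrite free andbT; apply/is_matchingP/matching_add.
- move=> M' /andP[/is_matchingP hM' /card_occs_eq0P noocc].
  have [w [lastM|wM]] := matching_cover hM' lt_last.
    by have := matching_ltn hM' lastM; have := (joins_ltK lastM).2; lia.
  have lt_w := matching_ltn hM' wM.
  exists (del_arc M' w n.*2.+1, Ordinal (ltn_trans lt_w lt_last)); last by rewrite /= del_arcK.
  rewrite !inE /= lt_w del_arcK //.
  by apply/andP; split; [exact/is_matchingP/matching_del | exact/card_occs_eq0P].
Qed.

Lemma a_0k k : a_nk 0 k = (k == 0).
Proof.
have arcs0 (M : arcs 0) : M = set0 by apply/setP=> -[[]].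
have match0 : is_matching (set0 : arcs 0).
  by apply/andP; split; apply/forallP=> -[[]].
rewrite a_nk_sum (eq_bigl (pred1 set0)) => [|M]; last by rewrite (arcs0 M) match0 /= eqxx.
by rewrite big_pred1_eq occ21E (arcs0 (occs _)) cards0 eq_sym.
Qed.

Theorem corollary3 :
  a_nk 1 1 = 0 /\ a_nk 2 1 = 1 /\
  (forall n : nat, (2 <= n)%N -> a_nk n.+1 1 = 2 * n * (a_nk n 1 + a_nk n.-1 1)).
Proof.
split; first by rewrite a_nkS1.
split; first by rewrite a_nkS1 a_nkS0 !a_0k.
case=> [|[|n]] // _; rewrite !a_nkS1 a_nkS0 a_nkS1 (maxn_idPl _) ?double_gt0 //.
rewrite -muln2; nia.
Qed.
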